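(* Let $G$ be a finite graph having at least one sink-free orientation. Consider the algorithm: orient each edge of $G$ independently and uniformly at random; while there is at least one sink, re-orient independently and uniformly at random all edges incident to some sink (all sinks present at that moment simultaneously); output the current orientation. Let $Z_{\mathrm{sink},0}$ be the number of sink-free orientations of $G$ and $Z_{\mathrm{sink},1}$ the number of orientations of $G$ with exactly one sink. Then the expected total number of resampled sinks (summed over all rounds) is $\frac{Z_{\mathrm{sink},1}}{Z_{\mathrm{sink},0}}$.
   Context: An orientation assigns to each edge $\{u,v\}$ one of the directions $(u,v)$ or $(v,u)$. A sink is a vertex $v$ such that every edge incident to $v$ is directed towards $v$. A sink-free orientation is one with no sink. *)

From HB Require Import structures.
From mathcomp Require Import all_boot all_order all_algebra.
From mathcomp Require Import all_classical all_reals all_analysis.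
Set Implicit Arguments. Unset Strict Implicit. Unset Printing Implicit Defensive.
Import Order.TTheory GRing.Theory Num.Theory.
Local Open Scope ring_scope.

(* A finite (loopless multi)graph: vertex type V, edge type E, each edge i
   has two distinct endpoints src i and tgt i.  An orientation is a boolean
   per edge: true = directed (src i, tgt i), false = directed (tgt i, src i). *)

Definition head (V E : finType) (src tgt : E -> V) (s : {ffun E -> bool}) (i : E) : V :=
  if s i then tgt i else src i.

Definition incident (V E : finType) (src tgt : E -> V) (v : V) (i : E) : bool :=
  (src i == v) || (tgt i == v).

Definition is_sink (V E : finType) (src tgt : E -> V) (s : {ffun E -> bool}) (v : V) : bool :=
  [forall i, incident src tgt v i ==> (head src tgt s i == v)].

Definition sinks (V E : finType) (src tgt : E -> V) (s : {ffun E -> bool}) : {set V} :=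
  [set v | is_sink src tgt s v].

Definition resampled (V E : finType) (src tgt : E -> V) (s : {ffun E -> bool}) : {set E} :=
  [set i | [exists v in sinks src tgt s, incident src tgt v i]].

Definition Zsink (V E : finType) (src tgt : E -> V) (k : nat) : nat :=
  #|[set s : {ffun E -> bool} | #|sinks src tgt s| == k]|.

(* If there is
   no sink, nothing changes (the algorithm has stopped). *)
Definition step_kernel (R : realType) (V E : finType) (src tgt : E -> V)
    (s t : {ffun E -> bool}) : R :=
  if [forall i, (i \notin resampled src tgt s) ==> (t i == s i)]
  then (2 ^+ #|resampled src tgt s|)^-1 else 0.

Fixpoint dist (R : realType) (V E : finType) (src tgt : E -> V) (n : nat)
    : {ffun {ffun E -> bool} -> R} :=
  match n with
  | 0 => [ffun s => (2 ^+ #|E|)^-1]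
  | n'.+1 => [ffun t => \sum_(s : {ffun E -> bool})
                          dist R src tgt n' s * step_kernel R src tgt s t]
  end.

(* expected number of sinks resampled in round n (0 once no sink remains) *)
Definition expected_resampled_sinks (R : realType) (V E : finType) (src tgt : E -> V)
    (n : nat) : R :=
  \sum_(s : {ffun E -> bool}) dist R src tgt n s * (#|sinks src tgt s|)%:R.

From Pilot Require Import Defs.
From HB Require Import structures.
From mathcomp Require Import all_boot all_order all_algebra reals ring.

(* Call the sink set S(s) of an orientation s its type; let Z_T be the number
   of orientations of type T and Z'_T the number of orientations whose sink set
   is T plus one further vertex, so that Z_{sink,0} = Z_∅ and Z_{sink,1} = Z'_∅.
   In an orientation of type T the edges at T are forced, and a round redraws
   exactly these edges.  So an orientation t is reached in one round from at most
   one orientation of type T, namely t with the edges at T turned towards T; that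
   orientation has sink set T ∪ (S(t) \ N[T]), hence is of type T exactly when
   S(t) ⊆ N[T].  It follows that the law after n rounds is uniform on every type,
   and counting over types shows that the potential
     F = |S| + Z'_∅/Z_∅ - Z'_S/Z_S,
   which vanishes on sink-free orientations, drops on average over each type by
   exactly the number of sinks in one round.  So the first n terms of the series
   sum to Z'_∅/Z_∅ - E[F after n rounds].  Finally |F| is at most a constant
   times the number of sinks, and the expected number of sinks tends to 0 because
   the partial sums are increasing and bounded. *)

Set Implicit Arguments.
Unset Strict Implicit.
Unset Printing Implicit Defensive.

Import Order.TTheory GRing.Theory Num.Theory.
Local Open Scope ring_scope.

Lemma card_ffun_eq_off (aT rT : finType) (X : {set aT}) (s : {ffun aT -> rT}) :
  #|[set t : {ffun aT -> rT} | [forall i, (i \notin X) ==> (t i == s i)]]| =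
  (#|rT| ^ #|X|)%N.
Proof.
pose F i : pred rT := if i \in X then predT else pred1 (s i).
have := card_family F; rewrite foldrE big_map big_enum /=.
have -> : (\prod_i #|F i| = \prod_(i in X) #|rT|)%N.
  rewrite [RHS]big_mkcond; apply: eq_bigr => i _.
  by rewrite /F; case: (i \in X); rewrite ?card1.
rewrite prod_nat_const => <-; apply: eq_card => t; rewrite !inE.
by apply/forallP/forallP => t_off i; have := t_off i; rewrite /F /=;
  case: (i \in X) => //=; rewrite inE.
Qed.

Lemma sumr_indicator (R : pzSemiRingType) (T : finType) (P : pred T) :
  \sum_(t : T) (P t)%:R = #|[set t | P t]|%:R :> R.
Proof. by rewrite -sum1dep_card natr_sum [RHS]big_mkcond; apply: eq_bigr => t _; case: (P t). Qed.

Lemma card_codim1_subsets (T : finType) (A : {set T}) (Q : pred {set T}) :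
  #|[set B : {set T} | (B \subset A) && (#|A :\: B| == 1%N) && Q B]| =
  #|[set v in A | Q (A :\ v)]|.
Proof.
have setD_setD1 v : v \in A -> A :\: (A :\ v) = [set v].
  by move=> vA; rewrite setDDr setDv set0U; apply/setIidPr; rewrite sub1set.
have inj : {in A &, injective (fun v => A :\ v)}.
  by move=> v w vA wA eAvw; apply: set1_inj; rewrite -setD_setD1 // eAvw setD_setD1.
have subA : {subset [set v in A | Q (A :\ v)] <= A} by move=> v; rewrite inE => /andP[].
rewrite -(card_in_imset (sub_in2 subA inj)).
apply: eq_card => B; rewrite !inE; apply/andP/imsetP => [[/andP[BA /cards1P[v eABv]] QB]|].
  have eB : B = A :\ v by rewrite -eABv setDDr setDv set0U; apply/esym/setIidPr.
  have vA : v \in A by rewrite -sub1set -eABv subsetDl.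
  by exists v; rewrite // inE vA -eB.
move=> [v]; rewrite inE => /andP[vA QAv] ->; split=> //.
by rewrite subD1set setD_setD1 // cards1.
Qed.

Lemma card_setD1_sub (T : finType) (A U : {set T}) :
  #|[set v in A | A :\ v \subset U]| = ((A \subset U) * #|A| + (#|A :\: U| == 1%N))%N.
Proof.
have remove_ok v : (A :\ v \subset U) = (A :\: U == [set v]) || (A \subset U).
  by rewrite subDset setUC -subDset subset1 setD_eq0.
case: (boolP (A \subset U)) => [AU|nAU].
  have -> : A :\: U = set0 by apply/eqP; rewrite setD_eq0.
  by rewrite cards0 mul1n addn0; apply: eq_card => v; rewrite !inE remove_ok AU orbT andbT.
rewrite mul0n add0n.
case: (boolP (#|A :\: U| == 1%N)) => [/cards1P[w ew]|ne1].
  rewrite /= -(cards1 w); apply: eq_card => v; rewrite !inE remove_ok (negbTE nAU) orbF ew.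
  have wA : w \in A by rewrite -sub1set -ew subsetDl.
  by apply/andP/eqP => [[_ /eqP/set1_inj ->]|->] //; rewrite wA eqxx.
apply/eqP; rewrite /= cards_eq0; apply/eqP/setP => v; rewrite !inE remove_ok (negbTE nAU) orbF.
by apply/negbTE; apply: contra ne1 => /andP[_ /eqP ->]; rewrite cards1.
Qed.

Lemma sum_mul_classwise_eq0 (R : pzSemiRingType) (T C : finType) (cls : T -> C)
    (d Y : T -> R) :
  (forall s s', cls s = cls s' -> d s = d s') ->
  (forall s0, \sum_(s | cls s == cls s0) Y s = 0) ->
  \sum_s d s * Y s = 0.
Proof.
move=> d_const Y_class; rewrite (partition_big cls xpredT) //=; apply: big1 => c _.
case: (pickP (fun s => cls s == c)) => [s0 /eqP e0|none]; last first.
  by rewrite big_pred0 // => s; rewrite none.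
rewrite (eq_bigr (fun s => d s0 * Y s)) => [|s /eqP es]; last by rewrite (d_const s s0) ?es.
by rewrite -mulr_sumr -e0 Y_class mulr0.
Qed.

Section Orientations.

Variables (V E : finType) (src tgt : E -> V).
Hypothesis loopless : forall i, src i != tgt i.
Hypothesis sink_free_exists : exists s : {ffun E -> bool}, sinks src tgt s = set0.

Local Notation orientation := {ffun E -> bool}.
Local Notation S := (sinks src tgt).
Local Notation hd := (Defs.head src tgt).
Local Notation inc := (incident src tgt).
Implicit Types (T : {set V}) (s t : orientation).

Lemma eq_head s s' i : s i = s' i -> hd s i = hd s' i.
Proof. by rewrite /Defs.head => ->. Qed.

Lemma head_inj s s' i : hd s i = hd s' i -> s i = s' i.
Proof.
rewrite /Defs.head; case: (s i); case: (s' i) => // /eqP;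
  by rewrite ?[tgt i == _]eq_sym (negbTE (loopless i)).
Qed.

Lemma sinkP s v : reflect (forall i, inc v i -> hd s i = v) (v \in S s).
Proof.
rewrite inE; apply: (iffP forallP) => [sink_v i vi|sink_v i].
  by have /implyP/(_ vi)/eqP := sink_v i.
by apply/implyP => /sink_v ->.
Qed.

Lemma incident_exists w : exists i, inc w i.
Proof.
case: (pickP (inc w)) => [i wi|none]; first by exists i.
case: sink_free_exists => s sf.
have : w \in S s by apply/sinkP => i; rewrite none.
by rewrite sf inE.
Qed.

Definition star (T : {set V}) : {set E} := [set i | [exists v in T, inc v i]].

Definition nbhd (T : {set V}) : {set V} := [set w | [exists i in star T, inc w i]].

(* When T consists of sinks of s0, [graft s0 T t] is t with the edges at T
   turned towards T, as they are in every orientation of type T. *)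
Definition graft (s0 : orientation) (T : {set V}) (t : orientation) : orientation :=
  [ffun i => if i \in star T then s0 i else t i].

Lemma starP T i : reflect (exists2 v, v \in T & inc v i) (i \in star T).
Proof. by rewrite inE; apply: (iffP exists_inP) => -[v]; exists v. Qed.

Lemma nbhdP T w : reflect (exists2 i, i \in star T & inc w i) (w \in nbhd T).
Proof. by rewrite inE; apply: (iffP exists_inP) => -[i]; exists i. Qed.

Lemma sub_nbhd T : T \subset nbhd T.
Proof.
apply/subsetP => w wT; have [i wi] := incident_exists w.
by apply/nbhdP; exists i => //; apply/starP; exists w.
Qed.

Lemma eq_on_star T s s' i :
  T \subset S s -> T \subset S s' -> i \in star T -> s i = s' i.
Proof.
move=> /subsetP sT /subsetP s'T /starP[v vT vi]; apply: head_inj.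
by rewrite (sinkP _ _ (sT v vT) i vi) (sinkP _ _ (s'T v vT) i vi).
Qed.

Section Graft.

Variables (s0 : orientation) (T : {set V}).
Hypothesis T_sinks : T \subset S s0.

Lemma sinks_graft t : S (graft s0 T t) = T :|: (S t :\: nbhd T).
Proof.
apply/setP => w; rewrite in_setU in_setD.
have [wT|wT] /= := boolP (w \in T).
  apply/sinkP => i wi; have iX : i \in star T by apply/starP; exists w.
  rewrite (@eq_head _ s0); first exact: (sinkP _ _ (subsetP T_sinks w wT)).
  by rewrite ffunE iX.
have [wN|wN] /= := boolP (w \in nbhd T).
  apply/negbTE/sinkP => sink_w; case/nbhdP: wN => i iX wi.
  have := sink_w i wi; rewrite (@eq_head _ s0); last by rewrite ffunE iX.
  case/starP: iX => v vT vi; rewrite (sinkP _ _ (subsetP T_sinks v vT) i vi) => evw.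
  by rewrite -evw vT in wT.
have graft_at_w i : inc w i -> graft s0 T t i = t i.
  move=> wi; rewrite ffunE; case: ifP => // iX.
  by case/negP: wN; apply/nbhdP; exists i.
by apply/sinkP/sinkP => sink_w i wi; rewrite -(sink_w i wi);
  apply: eq_head; rewrite graft_at_w.
Qed.

Lemma sinks_graft_eq t : (S (graft s0 T t) == T) = (S t \subset nbhd T).
Proof.
rewrite sinks_graft eqEsubset subsetUl andbT subUset subxx /=.
apply/idP/idP => [sub_T|]; last by rewrite -setD_eq0 => /eqP ->; rewrite sub0set.
apply/subsetP => w wt; apply/negPn/negP => wN.
have : w \in T by apply: (subsetP sub_T); rewrite inE wN.
by move/(subsetP (sub_nbhd T)); rewrite (negbTE wN).
Qed.

Lemma setD_sinks_graft t : S (graft s0 T t) :\: T = S t :\: nbhd T.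
Proof.
rewrite sinks_graft setDUl setDv set0U; apply/setDidPl.
rewrite disjoints_subset; apply/subsetP => w; rewrite in_setC in_setD => /andP[wN _].
by apply: contra wN => /(subsetP (sub_nbhd T)).
Qed.

Lemma card_graft_fiber s :
  #|[set t | graft s0 T t == s]| = if T \subset S s then (2 ^ #|star T|)%N else 0%N.
Proof.
case: ifP => [T_s|nT_s].
  rewrite -card_bool -(card_ffun_eq_off (star T) s); apply: eq_card => t; rewrite !inE.
  apply/eqP/forallP => [<- i|t_off]; first by apply/implyP => iX; rewrite ffunE (negbTE iX).
  apply/ffunP => i; rewrite ffunE; case: ifP => iX; first exact: eq_on_star iX.
  by have /implyP := t_off i; rewrite iX => /(_ isT)/eqP.
apply/eqP; rewrite cards_eq0; apply/eqP/setP => t; rewrite !inE.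
by apply/negbTE; apply: contraFN nT_s => /eqP <-; rewrite sinks_graft subsetUl.
Qed.

Lemma card_graft_preim (P : pred orientation) :
  #|[set t | P (graft s0 T t)]| = (2 ^ #|star T| * #|[set s | (T \subset S s) && P s]|)%N.
Proof.
rewrite -[LHS]sum1dep_card -[#|[set s | _ && P s]|]sum1dep_card.
rewrite (partition_big (graft s0 T) P) //= big_distrr /=.
rewrite big_mkcondl /=; apply: eq_bigr => s Ps.
rewrite muln1 -card_graft_fiber -sum1dep_card; apply: eq_bigl => t.
by case: (graft s0 T t =P s) => [->|]; rewrite ?Ps ?andbF.
Qed.

End Graft.

Definition Zset T := #|[set s | S s == T]|.

Definition Zext T := #|[set s | (T \subset S s) && (#|S s :\: T| == 1%N)]|.

Lemma Zset_gt0 T s : T \subset S s -> (0 < Zset T)%N.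
Proof.
move=> T_s; case: sink_free_exists => s1 sf1; apply/card_gt0P; exists (graft s T s1).
by rewrite inE sinks_graft // sf1 set0D setU0.
Qed.

Lemma Zext_eq0 T : Zset T = 0%N -> Zext T = 0%N.
Proof.
move=> Z0; apply/eqP; rewrite cards_eq0; apply/eqP/setP => s; rewrite !inE.
by apply/negbTE/negP => /andP[/Zset_gt0]; rewrite Z0.
Qed.

Lemma card_sinks_sub_nbhd s0 T : T \subset S s0 ->
  #|[set t | S t \subset nbhd T]| = (2 ^ #|star T| * Zset T)%N.
Proof.
move=> T_s0; transitivity #|[set t | S (graft s0 T t) == T]|.
  by apply: eq_card => t; rewrite !inE sinks_graft_eq.
rewrite (card_graft_preim T_s0 (fun s => S s == T)); congr (_ * _)%N.
by apply: eq_card => s; rewrite !inE; case: (S s =P T) => [->|]; rewrite ?subxx ?andbF.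
Qed.

Lemma card_one_sink_off_nbhd s0 T : T \subset S s0 ->
  #|[set t | #|S t :\: nbhd T| == 1%N]| = (2 ^ #|star T| * Zext T)%N.
Proof.
move=> T_s0; transitivity #|[set t | #|S (graft s0 T t) :\: T| == 1%N]|.
  by apply: eq_card => t; rewrite !inE setD_sinks_graft.
exact: (card_graft_preim T_s0 (fun s => #|S s :\: T| == 1%N)).
Qed.

Lemma sum_Zext_sub (U : {set V}) :
  (\sum_(T : {set V} | T \subset U) Zext T =
   \sum_t ((S t \subset U) * #|S t| + (#|S t :\: U| == 1%N)))%N.
Proof.
rewrite (eq_bigr (fun T => \sum_(s | (T \subset S s) && (#|S s :\: T| == 1%N)) 1)%N);
  last by move=> T _; rewrite sum1dep_card.
rewrite (exchange_big_dep predT) //=; apply: eq_bigr => t _.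
transitivity #|[set B : {set V} | (B \subset S t) && (#|S t :\: B| == 1%N) && (B \subset U)]|.
  by rewrite -sum1dep_card; apply: eq_bigl => B; rewrite andbC.
by rewrite card_codim1_subsets card_setD1_sub.
Qed.

Section Potential.

Variable R : realType.

Local Notation K := (step_kernel R src tgt).
Local Notation dist := (Defs.dist R src tgt).
Local Notation u := (expected_resampled_sinks R src tgt).

Definition ratio T : R := (Zext T)%:R / (Zset T)%:R.

Definition pot s : R := #|S s|%:R + ratio set0 - ratio (S s).

Lemma Zset_mul_ratio T : (Zset T)%:R * ratio T = (Zext T)%:R.
Proof.
case: (posnP (Zset T)) => [Z0|Zpos]; first by rewrite /ratio Z0 Zext_eq0 // !mul0r.
by rewrite mulrC divfK // pnatr_eq0 -lt0n.
Qed.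

Lemma sum_by_sinkset (g : {set V} -> R) :
  \sum_t g (S t) = \sum_(T : {set V}) (Zset T)%:R * g T.
Proof.
rewrite (partition_big S xpredT) //=; apply: eq_bigr => T _.
rewrite (eq_bigr (fun _ => g T)) => [|t /eqP -> //].
rewrite big_mkcond /= -sumr_indicator mulr_suml; apply: eq_bigr => t _.
by case: (S t == T); rewrite ?mul1r ?mul0r.
Qed.

Lemma sum_pot_sinks_sub (U : {set V}) :
  \sum_t (S t \subset U)%:R * pot t =
  ratio set0 * #|[set t | S t \subset U]|%:R - #|[set t | #|S t :\: U| == 1%N]|%:R.
Proof.
have ratio_part : \sum_t (S t \subset U)%:R * ratio (S t) =
    \sum_t ((S t \subset U)%:R * #|S t|%:R + (#|S t :\: U| == 1%N)%:R).
  rewrite (sum_by_sinkset (fun T => (T \subset U)%:R * ratio T)).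
  under [RHS]eq_bigr => t _ do rewrite -natrM -natrD.
  rewrite -natr_sum -sum_Zext_sub natr_sum [RHS]big_mkcond /=; apply: eq_bigr => T _.
  by rewrite mulrCA Zset_mul_ratio; case: (T \subset U); rewrite ?mul1r ?mul0r.
rewrite -!sumr_indicator mulr_sumr.
have -> : \sum_t (S t \subset U)%:R * pot t = \sum_t ((S t \subset U)%:R * #|S t|%:R
    + ratio set0 * (S t \subset U)%:R) - \sum_t (S t \subset U)%:R * ratio (S t).
  by rewrite -sumrB; apply: eq_bigr => t _; rewrite /pot; ring.
by rewrite ratio_part !big_split /=; ring.
Qed.

Lemma resampledE s : resampled src tgt s = star (S s).
Proof. by []. Qed.

Lemma step_kernel_ge0 s t : 0 <= K s t.
Proof. by rewrite /step_kernel; case: ifP => // _; rewrite invr_ge0 exprn_ge0. Qed.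

Lemma sum_step_kernel s : \sum_t K s t = 1.
Proof.
set X := resampled src tgt s.
rewrite (eq_bigr (fun t => [forall i, (i \notin X) ==> (t i == s i)]%:R * (2 ^+ #|X|)^-1));
  last by move=> t _; rewrite /step_kernel; case: ifP; rewrite ?mul1r ?mul0r.
by rewrite -mulr_suml sumr_indicator card_ffun_eq_off card_bool natrX mulfV ?expf_neq0 ?pnatr_eq0.
Qed.

Lemma sum_step_kernel_class s0 t :
  \sum_(s | S s == S s0) K s t =
  (2 ^+ #|star (S s0)|)^-1 * (S t \subset nbhd (S s0))%:R.
Proof.
set T := S s0; set g := graft s0 T t.
rewrite (eq_bigr (fun s => (s == g)%:R * (2 ^+ #|star T|)^-1)) => [|s /eqP sT]; last first.
  rewrite /step_kernel resampledE sT.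
  have -> : [forall i, (i \notin star T) ==> (t i == s i)] = (s == g).
    apply/forallP/eqP => [t_off|-> i]; last by apply/implyP => iX; rewrite ffunE (negbTE iX).
    apply/ffunP => i; rewrite ffunE; case: ifP => iX; first by apply: eq_on_star iX; rewrite ?sT.
    by have /implyP := t_off i; rewrite iX => /(_ isT)/eqP.
  by case: (s == g); rewrite ?mul1r ?mul0r.
rewrite -mulr_suml big_mkcond (bigD1 g) //= big1 => [|s /negbTE ->]; last by case: ifP.
by rewrite eqxx addr0 sinks_graft_eq ?subxx //; case: ifP; rewrite ?mulr1 ?mulr0 ?mul1r ?mul0r.
Qed.

Lemma sum_class_step_pot s0 :
  \sum_(s | S s == S s0) \sum_t K s t * pot t = \sum_(s | S s == S s0) (pot s - #|S s|%:R).
Proof.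
set T := S s0; have T_s0 : T \subset S s0 := subxx _.
rewrite exchange_big /=.
under eq_bigr => t _ do rewrite -mulr_suml sum_step_kernel_class -mulrA.
rewrite -mulr_sumr sum_pot_sinks_sub (card_sinks_sub_nbhd T_s0) (card_one_sink_off_nbhd T_s0).
rewrite (eq_bigr (fun _ => ratio set0 - ratio T)) => [|s /eqP sT]; last by rewrite /pot sT; ring.
rewrite sumr_const -(cardsE (fun s => S s == T)) -/(Zset T) -[_ *+ Zset T]mulr_natr -/T.
rewrite !natrM -Zset_mul_ratio natrX.
have p_neq0 : 2 ^+ #|star T| != 0 :> R by rewrite expf_neq0 ?pnatr_eq0.
by field.
Qed.

Lemma dist_succ n t : dist n.+1 t = \sum_s dist n s * K s t.
Proof. by rewrite /= ffunE. Qed.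

Lemma dist_ge0 n s : 0 <= dist n s.
Proof.
elim: n s => [|n IH] s; first by rewrite /= ffunE invr_ge0 exprn_ge0.
by rewrite dist_succ sumr_ge0 // => r _; rewrite mulr_ge0 ?step_kernel_ge0.
Qed.

Lemma sum_dist n : \sum_s dist n s = 1.
Proof.
elim: n => [|n IH].
  rewrite (eq_bigr (fun _ => (2 ^+ #|E|)^-1)) => [|s _]; last by rewrite /= ffunE.
  rewrite sumr_const card_ffun card_bool -[_ *+ (2 ^ _)]mulr_natr natrX.
  by rewrite mulVf ?expf_neq0 ?pnatr_eq0.
under eq_bigr => t _ do rewrite dist_succ.
rewrite exchange_big /= -[RHS]IH; apply: eq_bigr => s _.
by rewrite -mulr_sumr sum_step_kernel mulr1.
Qed.

Lemma dist_class_const n s s' : S s = S s' -> dist n s = dist n s'.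
Proof.
elim: n s s' => [|n IH] s s' ss'; first by rewrite /= !ffunE.
apply/eqP; rewrite !dist_succ -subr_eq0 -sumrB.
under eq_bigr => r _ do rewrite -mulrBr.
apply/eqP/(sum_mul_classwise_eq0 (cls := S)) => [|r0]; first exact: IH.
by rewrite sumrB !sum_step_kernel_class ss' subrr.
Qed.

Lemma expected_pot_succ n :
  \sum_s dist n.+1 s * pot s = \sum_s dist n s * pot s - u n.
Proof.
have -> : \sum_t dist n.+1 t * pot t = \sum_s dist n s * \sum_t K s t * pot t.
  under eq_bigr => t _ do rewrite dist_succ mulr_suml.
  rewrite exchange_big /=; apply: eq_bigr => s _; rewrite mulr_sumr.
  by apply: eq_bigr => t _; rewrite mulrA.
rewrite /expected_resampled_sinks -sumrB; apply/eqP; rewrite -subr_eq0 -sumrB; apply/eqP.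
under eq_bigr => s _ do rewrite -!mulrBr.
apply: (sum_mul_classwise_eq0 (cls := S)) => [|s0]; first exact: dist_class_const.
by rewrite sumrB sum_class_step_pot subrr.
Qed.

Lemma expected_pot0 : \sum_s dist 0 s * pot s = ratio set0.
Proof.
rewrite (eq_bigr (fun s => (2 ^+ #|E|)^-1 * ((S s \subset setT)%:R * pot s)));
  last by move=> s _; rewrite /= ffunE subsetT mul1r.
rewrite -mulr_sumr sum_pot_sinks_sub.
have -> : [set t | S t \subset setT] = setT by apply/setP => t; rewrite !inE subsetT.
have -> : [set t | #|S t :\: setT| == 1%N] = set0 by apply/setP => t; rewrite !inE setDT cards0.
rewrite cardsT card_ffun card_bool cards0 subr0 natrX.
have two_pow_neq0 : 2 ^+ #|E| != 0 :> R by rewrite expf_neq0 ?pnatr_eq0.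
by field.
Qed.

Lemma partial_sum_expected_resampled_sinks N :
  \sum_(0 <= k < N) u k = ratio set0 - \sum_s dist N s * pot s.
Proof.
elim: N => [|N IH]; first by rewrite big_geq // expected_pot0 subrr.
by rewrite big_nat_recr //= IH expected_pot_succ; ring.
Qed.

Lemma expected_resampled_sinks_ge0 n : 0 <= u n.
Proof. by apply: sumr_ge0 => s _; rewrite mulr_ge0 ?dist_ge0. Qed.

Lemma expected_resampled_sinks_le_card n : u n <= #|V|%:R.
Proof.
apply: (@le_trans _ _ (\sum_s dist n s * #|V|%:R)); last by rewrite -mulr_suml sum_dist mul1r.
by apply: ler_sum => s _; rewrite ler_wpM2l ?dist_ge0 // ler_nat max_card.
Qed.

Lemma norm_pot_le s : `|pot s| <= (\sum_r `|pot r|) * #|S s|%:R.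
Proof.
have [/eqP Ss0|/set0Pn[v vS]] := boolP (S s == set0).
  have -> : pot s = 0 by rewrite /pot Ss0 cards0 add0r subrr.
  by rewrite normr0 Ss0 cards0 mulr0.
apply: (@le_trans _ _ (\sum_r `|pot r|)).
  by rewrite (bigD1 s) //=; apply: ler_wpDr; rewrite ?sumr_ge0.
by apply: ler_peMr; rewrite ?sumr_ge0 // ler1n; apply/card_gt0P; exists v.
Qed.

Lemma norm_expected_pot_le n :
  `|\sum_s dist n s * pot s| <= (\sum_r `|pot r|) * u n.
Proof.
apply: (le_trans (ler_norm_sum _ _ _)); rewrite mulr_sumr; apply: ler_sum => s _.
by rewrite normrM ger0_norm ?dist_ge0 // mulrCA ler_wpM2l ?dist_ge0 ?norm_pot_le.
Qed.

Lemma ratio_set0 : ratio set0 = (Zsink src tgt 1)%:R / (Zsink src tgt 0)%:R.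
Proof.
rewrite /ratio /Zext /Zset /Zsink.
by congr (_%:R / _%:R); apply: eq_card => s; rewrite !inE ?sub0set ?setD0 ?cards_eq0.
Qed.

End Potential.

End Orientations.

From mathcomp Require Import all_classical all_reals all_analysis.
Import numFieldNormedType.Exports.
Local Open Scope classical_set_scope.

Lemma cvg_series_of_remainder_le (R : realType) (u : R^nat) (c M B : R) :
  (forall n, 0 <= u n) -> (forall n, u n <= B) ->
  (forall n, `|c - series u n| <= M * u n) ->
  series u @ \oo --> c.
Proof.
move=> u_ge0 u_le rem_le.
have rem_bound n : `|c - series u n| <= `|M| * B.
  apply: le_trans (rem_le n) _; apply: le_trans (ler_norm _) _.
  by rewrite normrM ler_wpM2l // ger0_norm ?u_le.
have : cvgn (series u).
  apply: nondecreasing_is_cvgn; first by apply: nondecreasing_series => n _ _; exact: u_ge0.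
  exists (c + `|M| * B) => _ [n _ <-].
  by rewrite -lerBlDl (le_trans _ (rem_bound n)) // distrC ler_norm.
move=> /cvg_series_cvg_0 u0.
have Mu0 : (fun n => M * u n) @ \oo --> 0 by rewrite -(mulr0 M); exact: cvgM (cvg_cst M) u0.
have rem0 : (fun n => c - series u n) @ \oo --> 0.
  apply/cvgr0Pnorm_le => eps eps_gt0; near=> n.
  apply: le_trans (rem_le n) (le_trans (ler_norm _) _).
  by near: n; apply: cvgr0_norm_le.
rewrite (_ : series u = fun n => c - (c - series u n)); last first.
  by apply/funext => n; rewrite opprB addrC subrK.
by rewrite -[X in _ --> X]subr0; apply: cvgB (cvg_cst c) rem0.
Unshelve. all: end_near.
Qed.

Theorem theorem16 (R : realType) (V E : finType) (src tgt : E -> V)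
  (loopless : forall i : E, src i != tgt i)
  (sink_free_exists : exists s : {ffun E -> bool}, sinks src tgt s = finset.set0) :
  series (expected_resampled_sinks R src tgt) @ \oo -->
    ((Zsink src tgt 1)%:R / (Zsink src tgt 0)%:R : R).
Proof.
rewrite -ratio_set0.
apply: (cvg_series_of_remainder_le (M := \sum_s `|pot src tgt R s|) (B := #|V|%:R)).
- exact: expected_resampled_sinks_ge0.
- exact: expected_resampled_sinks_le_card.
- move=> N; rewrite /series /= partial_sum_expected_resampled_sinks //.
  by rewrite opprB addrCA subrr addr0 norm_expected_pot_le.
Qed.
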